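(* Let $\alpha,\beta,\gamma,x$ be non-negative integers with $(\alpha,\beta,\gamma,x)\neq(0,0,0,0)$. Then for every integer $n\ge0$, $$T_{n+1}^{1,x}(\alpha,\beta,\gamma)=\gamma\,T_n^{1,x}(\alpha,\beta,\gamma-\alpha)+x\beta\sum_{k=0}^{n}\binom{n}{k}T_k^{1,x}(\alpha,\beta,\gamma+\beta-\alpha)\,T_{n-k}^{1,x}(\alpha,\beta,0).$$
   Context: For complex numbers $c,\alpha$ and an integer $n\ge 0$ let $(c|\alpha)_n=\prod_{i=0}^{n-1}(c-i\alpha)$, with $(c|\alpha)_0=1$. Let $E_{\alpha,c}(t)=\sum_{n\ge 0}(c|\alpha)_n\,t^n/n!$, viewed as a formal power series in $t$. It equals $(1+\alpha t)^{c/\alpha}$ if $\alpha\neq0$ and $e^{ct}$ if $\alpha=0$. For complex $\alpha,\beta,\gamma,x$ and a non-negative integer $\lambda$, the numbers $T_n^{\lambda,x}(\alpha,\beta,\gamma)$, $n\ge0$, are defined by the formal power series identity $$\sum_{n\ge0}T_n^{\lambda,x}(\alpha,\beta,\gamma)\frac{t^n}{n!}=E_{\alpha,\gamma}(t)\,\bigl(1-x(E_{\alpha,\beta}(t)-1)\bigr)^{-\lambda}.$$ The third argument may be any complex number. *)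

From HB Require Import structures.
From mathcomp Require Import all_boot all_order all_algebra all_field.
Set Implicit Arguments. Unset Strict Implicit. Unset Printing Implicit Defensive.
Import Order.TTheory GRing.Theory Num.Theory.
Local Open Scope ring_scope.

Definition fps := nat -> algC.

Definition fps_one : fps := fun n => (n == 0%N)%:R.

Definition fps_mul (f g : fps) : fps :=
  fun n => \sum_(k < n.+1) f k * g (n - k)%N.

Definition fps_pow (f : fps) (m : nat) : fps := iter m (fps_mul f) fps_one.

(* multiplicative inverse of a formal power series with nonzero constant term:
   g_0 = 1/f_0, g_n = -(1/f_0) * sum_{k=1}^n f_k g_{n-k} *)
Fixpoint fps_inv_seq (f : fps) (n : nat) : seq algC :=
  match n with
  | 0%N => [:: (f 0%N)^-1]
  | m.+1 => let s := fps_inv_seq f m in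
            rcons s (- (f 0%N)^-1 * \sum_(k < m.+1) f k.+1 * nth 0 s (m - k)%N)
  end.

Definition fps_inv (f : fps) : fps := fun n => nth 0 (fps_inv_seq f n) n.

Definition gfall (c alpha : algC) (n : nat) : algC :=
  \prod_(i < n) (c - i%:R * alpha).

Definition Efps (alpha c : algC) : fps := fun n => gfall c alpha n / n`!%:R.

Definition T (lambda : nat) (x alpha beta gamma : algC) (n : nat) : algC :=
  n`!%:R * fps_mul (Efps alpha gamma)
     (fps_pow (fps_inv (fun k => fps_one k - x * (Efps alpha beta k - fps_one k))) lambda) n.

From HB Require Import structures.
From mathcomp Require Import all_boot all_order all_algebra all_field.
From mathcomp Require Import ring.
From Stdlib Require Import FunctionalExtensionality.
Import Order.TTheory GRing.Theory Num.Theory.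
Local Open Scope ring_scope.

(* Write E_c for E_{alpha,c}, F = 1 - x (E_beta - 1) and
   G = F^{-1}, so that the numbers T_n^{1,x}(alpha,beta,c) are n! times the
   coefficients of E_c G.  With D the formal derivative:
   - D E_c = c E_{c-alpha}   (from (c|alpha)_{n+1} = c (c-alpha|alpha)_n),
   - E_c E_d = E_{c+d}       (both sides solve the same differential recursion),
   - D G = x beta G (E_{beta-alpha} G)   (differentiate F G = 1).
   Hence, by the Leibniz rule,
     D (E_c G) = c E_{c-alpha} G + x beta (E_{c+beta-alpha} G) (E_0 G),
   and reading off n!-scaled coefficients turns the Cauchy product into the
   binomial convolution of the statement.  The identity thus holds for all
   complex alpha, beta, gamma, x (lemma T1_recurrence); the theorem is its
   specialization to non-negative integers.
   The ring laws of the Cauchy product and the Leibniz rule are obtained by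
   comparing with products of truncations in {poly algC}. *)

Definition fps_trunc (f : fps) (N : nat) : {poly algC} := \poly_(i < N) f i.

Lemma coef_fps_trunc f N i : (i < N)%N -> (fps_trunc f N)`_i = f i.
Proof. by move=> ltiN; rewrite coef_poly ltiN. Qed.

Lemma fps_mul_coefM f g (p q : {poly algC}) n :
  (forall i, (i <= n)%N -> p`_i = f i) -> (forall i, (i <= n)%N -> q`_i = g i) ->
  fps_mul f g n = (p * q)`_n.
Proof.
move=> pf qg; rewrite coefM /fps_mul; apply: eq_bigr => -[i lein] _ /=.
by rewrite pf // qg // leq_subr.
Qed.

Lemma coef_fps_truncM f g {N i} :
  (i < N)%N -> (fps_trunc f N * fps_trunc g N)`_i = fps_mul f g i.
Proof.
move=> ltiN; symmetry.
by apply: fps_mul_coefM => k leki; apply: coef_fps_trunc; exact: leq_ltn_trans leki ltiN.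
Qed.

Lemma fps_mulC f g : fps_mul f g = fps_mul g f.
Proof.
apply: functional_extensionality => n.
by rewrite -(coef_fps_truncM f g (ltnSn n)) mulrC coef_fps_truncM.
Qed.

Lemma fps_mulA f g h : fps_mul (fps_mul f g) h = fps_mul f (fps_mul g h).
Proof.
apply: functional_extensionality => n.
rewrite (@fps_mul_coefM _ _ (fps_trunc f n.+1 * fps_trunc g n.+1)
                            (fps_trunc h n.+1)); last first.
- by move=> i lein; rewrite coef_fps_trunc.
- by move=> i lein; rewrite coef_fps_truncM.
rewrite -mulrA; symmetry; apply: fps_mul_coefM => i lein.
  by rewrite coef_fps_trunc.
by rewrite coef_fps_truncM.
Qed.

Lemma fps_mul1l f : fps_mul fps_one f = f.
Proof.
apply: functional_extensionality => n; rewrite /fps_mul big_ord_recl /= subn0.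
by rewrite big1 ?addr0 /fps_one /= ?mul1r // => i _; rewrite mul0r.
Qed.

Lemma fps_mulZl c f g : fps_mul (fun n => c * f n) g = fun n => c * fps_mul f g n.
Proof.
apply: functional_extensionality => n; rewrite /fps_mul mulr_sumr.
by apply: eq_bigr => i _; rewrite mulrA.
Qed.

Lemma fps_mulZr c f g : fps_mul f (fun n => c * g n) = fun n => c * fps_mul f g n.
Proof. by rewrite fps_mulC fps_mulZl fps_mulC. Qed.

Definition fps_deriv (f : fps) : fps := fun n => n.+1%:R * f n.+1.

Lemma fps_derivM f g :
  fps_deriv (fps_mul f g) = fun n => fps_mul (fps_deriv f) g n + fps_mul f (fps_deriv g) n.
Proof.
apply: functional_extensionality => n.
rewrite /fps_deriv -(coef_fps_truncM f g (ltnSn n.+1)).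
rewrite mulr_natl -coef_deriv derivM coefD.
congr (_ + _); symmetry; apply: fps_mul_coefM => i lein.
- by rewrite coef_deriv coef_fps_trunc ?mulr_natl // !ltnS.
- by rewrite coef_fps_trunc // ltnS (leq_trans lein).
- by rewrite coef_fps_trunc // ltnS (leq_trans lein).
- by rewrite coef_deriv coef_fps_trunc ?mulr_natl // !ltnS.
Qed.

Lemma size_fps_inv_seq f m : size (fps_inv_seq f m) = m.+1.
Proof. by elim: m => //= m IHm; rewrite size_rcons IHm. Qed.

Lemma nth_fps_inv_seq f m i : (i <= m)%N -> nth 0 (fps_inv_seq f m) i = fps_inv f i.
Proof.
elim: m i => [|m IHm] i; first by rewrite leqn0 => /eqP ->.
rewrite leq_eqVlt => /orP[/eqP -> //|ltim].
by rewrite /= nth_rcons size_fps_inv_seq ltim IHm.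
Qed.

Lemma fps_invS f m : fps_inv f m.+1 =
  - (f 0%N)^-1 * \sum_(k < m.+1) f k.+1 * fps_inv f (m - k)%N.
Proof.
rewrite /fps_inv /= nth_rcons size_fps_inv_seq ltnn eqxx; congr (_ * _).
by apply: eq_bigr => -[k ltkm] _ /=; rewrite nth_fps_inv_seq // leq_subr.
Qed.

Lemma fps_mulV f : f 0%N != 0 -> fps_mul f (fps_inv f) = fps_one.
Proof.
move=> f0_neq0; apply: functional_extensionality => -[|m].
  by rewrite /fps_mul big_ord1 /fps_inv /= divff.
rewrite /fps_mul big_ord_recl /= subn0 fps_invS /fps_one /=.
by rewrite mulrA mulrN divff // mulN1r addNr.
Qed.

Lemma gfallS c a n : gfall c a n.+1 = c * gfall (c - a) a n.
Proof.
rewrite /gfall big_ord_recl /= mul0r subr0; congr (_ * _).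
apply: eq_bigr => i _; rewrite /bump /= add1n -addn1 natrD mulrDl mul1r.
by rewrite opprD addrA addrAC.
Qed.

Lemma Efps_at0 a c : Efps a c 0%N = 1.
Proof. by rewrite /Efps /gfall big_ord0 divr1. Qed.

Lemma Efps_deriv a c : fps_deriv (Efps a c) = fun n => c * Efps a (c - a) n.
Proof.
apply: functional_extensionality => n; rewrite /fps_deriv /Efps gfallS factS natrM.
have fact_neq0 : (n`!%:R : algC) != 0 by rewrite pnatr_eq0 -lt0n fact_gt0.
have Sn_neq0 : (n.+1%:R : algC) != 0 by rewrite pnatr_eq0.
by field; rewrite fact_neq0 (_ : 1 + n%:R = n.+1%:R) ?Sn_neq0 // addrC natr1.
Qed.

Lemma Efps_param0 a : Efps a 0 = fps_one.
Proof.
apply: functional_extensionality => -[|n]; first by rewrite Efps_at0.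
by rewrite /Efps gfallS !mul0r.
Qed.

(* Exponential law E_c E_d = E_{c+d}, by induction on the coefficient index:
   D (E_c E_d) = c E_{c-a} E_d + d E_c E_{d-a}, which by induction is
   (c+d) E_{c+d-a} = D E_{c+d}. *)
Lemma Efps_mul a c d : fps_mul (Efps a c) (Efps a d) = Efps a (c + d).
Proof.
apply: functional_extensionality => n; elim: n c d => [|n IHn] c d.
  by rewrite /fps_mul big_ord1 !Efps_at0 mul1r.
have Sn_neq0 : (n.+1%:R : algC) != 0 by rewrite pnatr_eq0.
apply: (mulfI Sn_neq0).
have := congr1 (fun f => f n) (fps_derivM (Efps a c) (Efps a d)).
have := congr1 (fun f => f n) (Efps_deriv a (c + d)).
rewrite /fps_deriv /= => -> ->; rewrite -!/(fps_deriv _) !Efps_deriv.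
rewrite fps_mulZl fps_mulZr IHn IHn /=.
by rewrite addrAC addrA mulrDl.
Qed.

Definition Fden (x a b : algC) : fps := fun k => fps_one k - x * (Efps a b k - fps_one k).
Definition Gden (x a b : algC) : fps := fps_inv (Fden x a b).

(* F has constant term 1, so G really is its inverse. *)
Lemma Fden_mulV x a b : fps_mul (Fden x a b) (Gden x a b) = fps_one.
Proof.
apply: fps_mulV.
by rewrite /Fden Efps_at0 /fps_one /= subrr mulr0 subr0 oner_neq0.
Qed.

Lemma Fden_deriv x a b : fps_deriv (Fden x a b) = fun n => - (x * b) * Efps a (b - a) n.
Proof.
apply: functional_extensionality => n.
have := congr1 (fun f => f n) (Efps_deriv a b); rewrite /fps_deriv /= => EbS.
by rewrite /Fden /fps_one /= subr0 sub0r mulrN mulNr mulrCA EbS mulrA.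
Qed.

(* D G = x b G (E_{b-a} G), obtained by differentiating F G = 1. *)
Lemma Gden_deriv x a b : fps_deriv (Gden x a b) =
  fun n => (x * b) * fps_mul (Gden x a b) (fps_mul (Efps a (b - a)) (Gden x a b)) n.
Proof.
set G := Gden x a b; set F := Fden x a b.
have F_DG : fps_mul F (fps_deriv G) = fun n => (x * b) * fps_mul (Efps a (b - a)) G n.
  apply: functional_extensionality => n.
  have := congr1 (fun f => f n) (fps_derivM F G).
  rewrite Fden_mulV /fps_deriv /fps_one /= mulr0 -!/(fps_deriv _) Fden_deriv.
  by rewrite fps_mulZl mulNr => /eqP; rewrite eq_sym addrC subr_eq0 => /eqP <-.
rewrite -[fps_deriv G]fps_mul1l -(Fden_mulV x a b) -/F -/G [fps_mul F G]fps_mulC.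
by rewrite fps_mulA F_DG fps_mulZr.
Qed.

Lemma EG_deriv x a b c n :
  fps_deriv (fps_mul (Efps a c) (Gden x a b)) n =
  c * fps_mul (Efps a (c - a)) (Gden x a b) n
  + x * b * fps_mul (fps_mul (Efps a (c + b - a)) (Gden x a b))
                    (fps_mul (Efps a 0) (Gden x a b)) n.
Proof.
rewrite fps_derivM Efps_deriv fps_mulZl Gden_deriv fps_mulZr Efps_param0 fps_mul1l.
set G := Gden x a b.
by rewrite (fps_mulC G) -!fps_mulA Efps_mul addrA.
Qed.

Lemma fact_coef_deriv f n : n.+1`!%:R * f n.+1 = n`!%:R * fps_deriv f n.
Proof. by rewrite /fps_deriv factS natrM mulrA [_ * n`!%:R]mulrC. Qed.

Lemma fact_coef_mul f g n : n`!%:R * fps_mul f g n =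
  \sum_(k < n.+1) 'C(n, k)%:R * (k`!%:R * f k) * ((n - k)`!%:R * g (n - k)%N).
Proof.
rewrite /fps_mul mulr_sumr; apply: eq_bigr => -[k ltkn] _ /=.
rewrite -(bin_fact (ltkn : (k <= n)%N)) !natrM.
by rewrite -!mulrA; congr (_ * (_ * _)); rewrite mulrCA.
Qed.

Lemma T1E x a b c n : T 1 x a b c n = n`!%:R * fps_mul (Efps a c) (Gden x a b) n.
Proof. by rewrite /T /fps_pow /= (fps_mulC _ fps_one) fps_mul1l. Qed.

Lemma T1_recurrence (x a b c : algC) n :
  T 1 x a b c n.+1 =
    c * T 1 x a b (c - a) n
  + x * b * \sum_(k < n.+1) 'C(n, k)%:R * T 1 x a b (c + b - a) k * T 1 x a b 0 (n - k)%N.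
Proof.
rewrite T1E fact_coef_deriv EG_deriv mulrDr !T1E; congr (_ + _).
  by rewrite mulrCA.
rewrite mulrCA fact_coef_mul; congr (_ * _).
by apply: eq_bigr => k _; rewrite !T1E.
Qed.

Theorem theorem4 (alpha beta gamma x : nat) :
  (alpha, beta, gamma, x) != (0%N, 0%N, 0%N, 0%N) ->
  forall n : nat,
    T 1 x%:R alpha%:R beta%:R gamma%:R n.+1 =
      gamma%:R * T 1 x%:R alpha%:R beta%:R (gamma%:R - alpha%:R) n
    + x%:R * beta%:R *
      \sum_(k < n.+1) 'C(n, k)%:R
          * T 1 x%:R alpha%:R beta%:R (gamma%:R + beta%:R - alpha%:R) k
          * T 1 x%:R alpha%:R beta%:R 0 (n - k)%N.
Proof. by move=> _ n; exact: T1_recurrence. Qed.
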